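(* Let $G=\mathbb T^{\mathbb Z}$ (product topology, $\mathbb T=\mathbb R/\mathbb Z$) and $S:G\to G$ the shift $S(x)(n)=x(n+1)$. Let $x=(a_n)_{n\in\mathbb Z}\in G$ where the reals $a_n$ ($n\in\mathbb Z$) together with $1$ are linearly independent over $\mathbb Q$. Then there is no metrizable SIN group $H$ containing $G$ as a topological subgroup together with $t\in H$ such that $txt^{-1}=S(x)$.
   Context: A topological group is SIN if every neighborhood of the identity contains a neighborhood $V$ of the identity with $gVg^{-1}=V$ for all $g$; a metrizable group is SIN iff it admits a compatible two-sided invariant metric. *)

From Stdlib Require Import Reals ZArith List QArith Qreals.
Open Scope R_scope.

Record TopGroup := {
  tg_car :> Type;
  tg_mul : tg_car -> tg_car -> tg_car;
  tg_inv : tg_car -> tg_car;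
  tg_one : tg_car;
  tg_open : (tg_car -> Prop) -> Prop;
  tg_assoc : forall a b c, tg_mul a (tg_mul b c) = tg_mul (tg_mul a b) c;
  tg_mul1l : forall a, tg_mul tg_one a = a;
  tg_mulVl : forall a, tg_mul (tg_inv a) a = tg_one;
  tg_open_full : tg_open (fun _ => True);
  tg_open_empty : tg_open (fun _ => False);
  tg_open_inter : forall U V, tg_open U -> tg_open V ->
      tg_open (fun x => U x /\ V x);
  tg_open_union : forall F : (tg_car -> Prop) -> Prop,
      (forall U, F U -> tg_open U) -> tg_open (fun x => exists U, F U /\ U x);
  tg_mul_cont : forall W, tg_open W -> forall x y, W (tg_mul x y) ->
      exists U V, tg_open U /\ tg_open V /\ U x /\ V y /\
        forall a b, U a -> V b -> W (tg_mul a b);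
  tg_inv_cont : forall W, tg_open W -> tg_open (fun x => W (tg_inv x))
}.

Arguments tg_mul {t} _ _.
Arguments tg_inv {t} _.
Arguments tg_one {t}.
Arguments tg_open {t} _.

Definition nbhd1 {H : TopGroup} (V : H -> Prop) : Prop :=
  exists O, tg_open O /\ O tg_one /\ forall x, O x -> V x.

Definition SIN_group (H : TopGroup) : Prop :=
  forall N : H -> Prop, nbhd1 N ->
    exists V : H -> Prop, nbhd1 V /\ (forall x, V x -> N x) /\
      forall g x, V (tg_mul (tg_mul g x) (tg_inv g)) <-> V x.

Definition metrizable (H : TopGroup) : Prop :=
  exists d : H -> H -> R,
    (forall x y, d x y = 0 <-> x = y) /\
    (forall x y, d x y = d y x) /\
    (forall x y z, d x z <= d x y + d y z) /\
    (forall U : H -> Prop, tg_open U <->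
       forall x, U x -> exists eps, eps > 0 /\ forall y, d x y < eps -> U y).

Record T := mkT { tval : R; tval_range : 0 <= tval < 1 }.

Lemma frac_part_range (r : R) : 0 <= frac_part r < 1.
Proof. destruct (base_fp r) as [H1 H2]; split; [apply Rge_le; exact H1 | exact H2]. Qed.

Definition projT (r : R) : T := mkT (frac_part r) (frac_part_range r).

Definition T_open (U : T -> Prop) : Prop :=
  forall r, U (projT r) -> exists eps, eps > 0 /\
     forall s, Rabs (s - r) < eps -> U (projT s).

Definition T_add (a b : T) : T := projT (tval a + tval b).

Definition G := Z -> T.

Definition G_add (x y : G) : G := fun n => T_add (x n) (y n).
Definition G_zero : G := fun _ => projT 0.

Definition G_open (U : G -> Prop) : Prop :=
  forall x, U x -> exists (l : list Z) (V : Z -> T -> Prop),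
    (forall n, In n l -> T_open (V n) /\ V n (x n)) /\
    (forall y, (forall n, In n l -> V n (y n)) -> U y).

Definition G_shift (x : G) : G := fun n => x (n + 1)%Z.

(* iota : G -> H realises G as a topological subgroup of H:
   an injective homomorphism which is a homeomorphism onto its image
   (with the subspace topology). *)
Definition top_subgroup_embedding (H : TopGroup) (iota : G -> H) : Prop :=
  (forall x y, iota (G_add x y) = tg_mul (iota x) (iota y)) /\
  (forall x y, iota x = iota y -> x = y) /\
  (forall U : G -> Prop, G_open U <->
     exists W : H -> Prop, tg_open W /\ forall x, U x <-> W (iota x)).

(* linear independence over Q of {1} ∪ {a_n : n ∈ Z} (the a_n being distinct
   members of the family indexed by Z) *)
Fixpoint lin_comb (a : Z -> R) (c : Z -> Q) (l : list Z) : R :=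
  match l with
  | nil => 0
  | n :: l' => Q2R (c n) * a n + lin_comb a c l'
  end.

Definition Q_lin_indep_with_1 (a : Z -> R) : Prop :=
  forall (l : list Z) (c : Z -> Q) (c0 : Q), NoDup l ->
    Q2R c0 + lin_comb a c l = 0 ->
    Q2R c0 = 0 /\ forall n, In n l -> Q2R (c n) = 0.

From Stdlib Require Import Reals ZArith List QArith Qreals Lra Lia.
From Stdlib Require Import Classical ProofIrrelevance FunctionalExtensionality.
Open Scope R_scope.

(** 1. Kronecker's theorem: the multiples [m x] ([m] in [N]) are dense in [G].
       We use the kernel [prod_(n in L) ((1 + cos (2 PI u_n)) / 2) ^ p], a
       trigonometric polynomial with nonnegative coefficients and mean at least
       [(p+1) ^ (-|L|)] (computed by a discrete average over roots of unity),
       which is at most [rho ^ p] wherever some coordinate misses its target.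
       Linear independence makes every nonconstant frequency non-resonant, so
       its Weyl sums along [m a - target] are bounded; choosing [p] with
       [rho ^ p (p+1) ^ |L| < 1], some [m] must hit the target box.
    2. [y |-> t y t^-1] and [y |-> S y] are continuous homomorphisms [G -> H]
       that agree on the dense set of multiples of [x]; as [H] is Hausdorff
       (metrizable) they agree on all of [G].
    3. A conjugation-invariant neighbourhood of [1] that controls coordinate [0]
       contains the point with [1/2] at a coordinate [K] it does not see and [0]
       elsewhere; conjugating [K] times by [t] moves the [1/2] to coordinate [0]
       while staying in the neighbourhood, a contradiction.  Metrizability is
       only used through the Hausdorff property. *)

Fixpoint sum_upto (f : nat -> R) (M : nat) : R :=
  match M with O => 0 | S M' => sum_upto f M' + f M' end.

Lemma sum_upto_plus f g M :
  sum_upto (fun m => f m + g m) M = sum_upto f M + sum_upto g M.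
Proof. induction M; simpl; [ring | rewrite IHM; ring]. Qed.

Lemma sum_upto_scal c f M : sum_upto (fun m => c * f m) M = c * sum_upto f M.
Proof. induction M; simpl; [ring | rewrite IHM; ring]. Qed.

Lemma sum_upto_const c M : sum_upto (fun _ => c) M = INR M * c.
Proof. induction M; simpl sum_upto; [simpl; ring | rewrite IHM, S_INR; ring]. Qed.

Lemma sum_upto_ext f g M : (forall m, f m = g m) -> sum_upto f M = sum_upto g M.
Proof. intros E; induction M; simpl; [reflexivity | rewrite IHM, E; reflexivity]. Qed.

Lemma sum_upto_ge_first f M :
  (forall m, 0 <= f m) -> (0 < M)%nat -> f O <= sum_upto f M.
Proof.
  intros Hf HM; induction M as [|M IH]; [lia|]; simpl.
  destruct M; [simpl; lra|].
  assert (f O <= sum_upto f (S M)) by (apply IH; lia).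
  specialize (Hf (S M)); lra.
Qed.

Lemma sum_upto_exists_gt f M c : sum_upto f M > INR M * c -> exists m, f m > c.
Proof.
  induction M; simpl sum_upto; intros H; [simpl in H; lra|].
  rewrite S_INR in H. destruct (Rlt_le_dec c (f M)) as [h|h].
  - exists M; lra.
  - apply IHM; lra.
Qed.

Lemma trig_Zperiod x k :
  sin (x + 2 * PI * IZR k) = sin x /\ cos (x + 2 * PI * IZR k) = cos x.
Proof.
  assert (Hk : IZR k = INR (Z.abs_nat k) \/ IZR k = - INR (Z.abs_nat k)).
  { rewrite INR_IZR_INZ, Nat2Z.inj_abs_nat.
    destruct (Z.abs_spec k) as [[_ ->] | [_ ->]]; [left | right]; rewrite ?opp_IZR; lra. }
  set (n := Z.abs_nat k) in Hk.
  destruct Hk as [-> | ->].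
  - replace (x + 2 * PI * INR n) with (x + 2 * INR n * PI) by ring.
    split; [apply sin_period | apply cos_period].
  - rewrite <- (sin_period (x + 2 * PI * - INR n) n), <- (cos_period (x + 2 * PI * - INR n) n).
    replace (x + 2 * PI * - INR n + 2 * INR n * PI) with x by ring. split; reflexivity.
Qed.

(** Telescoping identity behind the Weyl sum estimate:
    [2 sin(PI g) cos(2 PI m g + phi) = sin(2 PI (m+1/2) g + phi) - sin(2 PI (m-1/2) g + phi)]. *)
Lemma cos_sum_telescope g phi M :
  2 * sin (PI * g) * sum_upto (fun m => cos (2 * PI * INR m * g + phi)) M =
  sin (2 * PI * INR M * g - PI * g + phi) - sin (- (PI * g) + phi).
Proof.
  induction M as [|M IH]; simpl sum_upto.
  - simpl. replace (2 * PI * 0 * g - PI * g + phi) with (- (PI * g) + phi) by ring. ring.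
  - rewrite Rmult_plus_distr_l, IH, S_INR.
    replace (2 * PI * (INR M + 1) * g - PI * g + phi)
      with ((2 * PI * INR M * g + phi) + PI * g) by ring.
    replace (2 * PI * INR M * g - PI * g + phi)
      with ((2 * PI * INR M * g + phi) - PI * g) by ring.
    rewrite (sin_plus (2 * PI * INR M * g + phi)), (sin_minus (2 * PI * INR M * g + phi)). ring.
Qed.

Lemma cos_sum_bound g phi M : sin (PI * g) <> 0 ->
  Rabs (sum_upto (fun m => cos (2 * PI * INR m * g + phi)) M) <= / Rabs (sin (PI * g)).
Proof.
  intros Hs. set (S0 := sum_upto _ M).
  assert (E := cos_sum_telescope g phi M). fold S0 in E.
  assert (Hb : Rabs (2 * sin (PI * g) * S0) <= 2).
  { rewrite E. destruct (SIN_bound (2 * PI * INR M * g - PI * g + phi)).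
    destruct (SIN_bound (- (PI * g) + phi)). apply Rabs_le; lra. }
  rewrite !Rabs_mult, (Rabs_right 2) in Hb by lra.
  assert (Hp : 0 < Rabs (sin (PI * g))) by (apply Rabs_pos_lt; auto).
  apply (Rmult_le_reg_l (Rabs (sin (PI * g)))); auto.
  rewrite Rinv_r by lra. lra.
Qed.

Lemma INR_S_pos p : 0 < INR (S p).
Proof. apply lt_0_INR; lia. Qed.

Lemma cos_sum_roots_of_unity (k : Z) (p : nat) :
  (k <> 0)%Z -> (Z.abs k <= Z.of_nat p)%Z ->
  sum_upto (fun m => cos (2 * PI * (IZR k * (INR m / INR (S p))))) (S p) = 0.
Proof.
  intros Hk Hkp. set (g := IZR k / INR (S p)).
  assert (HS := INR_S_pos p). assert (HPI := PI_RGT_0).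
  assert (Hs : sin (PI * g) <> 0).
  { intros H0. apply sin_eq_0_0 in H0. destruct H0 as [z Hz].
    assert (Hkz : IZR k = IZR z * INR (S p)).
    { unfold g in Hz.
      apply (Rmult_eq_reg_l (PI / INR (S p))); [|apply Rgt_not_eq, Rdiv_lt_0_compat; lra].
      replace (PI / INR (S p) * IZR k) with (PI * (IZR k / INR (S p))) by (field; lra).
      rewrite Hz. field. lra. }
    rewrite INR_IZR_INZ, <- mult_IZR in Hkz. apply eq_IZR in Hkz. subst k.
    rewrite Z.abs_mul, Nat2Z.inj_succ, (Z.abs_eq (Z.succ _)) in Hkp by lia.
    assert (z <> 0%Z) by (intro; subst; lia). nia. }
  assert (E := cos_sum_telescope g 0 (S p)).
  rewrite (sum_upto_ext _ (fun m => cos (2 * PI * INR m * g + 0))).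
  2:{ intros m. f_equal. unfold g. field. lra. }
  replace (2 * PI * INR (S p) * g - PI * g + 0) with (- (PI * g) + 2 * PI * IZR k) in E
    by (unfold g; field; lra).
  rewrite (proj1 (trig_Zperiod _ _)), Rplus_0_r, Rminus_diag in E.
  apply Rmult_integral in E. destruct E as [E|E]; auto.
  apply Rmult_integral in E. destruct E; lra.
Qed.

(** Real trigonometric polynomials in finitely many variables [u_n], [n] in [L]:
    a list of terms [(alpha, c)] standing for [alpha cos (2 PI <c, u>)], with an
    integer frequency vector [c] and [<c, u> = sum_(n in L) c n * u n]. *)
Definition tpoly := list (R * (Z -> Z)).

Fixpoint dot (L : list Z) (c : Z -> Z) (u : Z -> R) : R :=
  match L with nil => 0 | n :: L' => IZR (c n) * u n + dot L' c u end.

Fixpoint teval (L : list Z) (P : tpoly) (u : Z -> R) : R :=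
  match P with
  | nil => 0
  | (al, c) :: P' => al * cos (2 * PI * dot L c u) + teval L P' u
  end.

Definition is_zero_freq (L : list Z) (c : Z -> Z) : bool :=
  forallb (fun n => Z.eqb (c n) 0) L.

(** The mean of [P] over the torus: the total weight of its zero-frequency terms. *)
Fixpoint tmean (L : list Z) (P : tpoly) : R :=
  match P with
  | nil => 0
  | (al, c) :: P' => (if is_zero_freq L c then al else 0) + tmean L P'
  end.

(** Product of two terms, by [cos A cos B = (cos (A + B) + cos (A - B)) / 2],
    and of two polynomials. *)
Definition tmul_term (p q : R * (Z -> Z)) : tpoly :=
  let (al, c) := p in let (be, d) := q in
  (al * be / 2, fun n => (c n + d n)%Z) :: (al * be / 2, fun n => (c n - d n)%Z) :: nil.

Definition tmul (P1 P2 : tpoly) : tpoly :=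
  flat_map (fun p => flat_map (tmul_term p) P2) P1.

Definition nonneg_coeffs (P : tpoly) : Prop := forall p, In p P -> 0 <= fst p.

Lemma dot_add L c d u : dot L (fun n => (c n + d n)%Z) u = dot L c u + dot L d u.
Proof. induction L; simpl; [ring | rewrite IHL, plus_IZR; ring]. Qed.

Lemma dot_sub L c d u : dot L (fun n => (c n - d n)%Z) u = dot L c u - dot L d u.
Proof. induction L; simpl; [ring | rewrite IHL, minus_IZR; ring]. Qed.

Lemma dot_affine L c a tg m :
  dot L c (fun n => m * a n - tg n) = m * dot L c a - dot L c tg.
Proof. induction L; simpl; [ring | rewrite IHL; ring]. Qed.

Lemma is_zero_freq_spec L c : is_zero_freq L c = true <-> forall n, In n L -> c n = 0%Z.
Proof.
  unfold is_zero_freq. rewrite forallb_forall.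
  split; intros H n Hn; apply Z.eqb_eq; auto.
Qed.

Lemma dot_zero_freq L c u : is_zero_freq L c = true -> dot L c u = 0.
Proof.
  rewrite is_zero_freq_spec. induction L; simpl; intros H; [reflexivity|].
  rewrite H, IHL by auto. simpl; ring.
Qed.

Lemma dot_single L n k c u : NoDup L -> In n L ->
  (forall n', c n' = if Z.eq_dec n' n then k else 0%Z) -> dot L c u = IZR k * u n.
Proof.
  intros HN Hin Hc. induction L as [|n0 L IH]; [destruct Hin|].
  inversion HN; subst. simpl. destruct Hin as [<- | Hin].
  - rewrite Hc. destruct (Z.eq_dec n0 n0); [|congruence].
    rewrite dot_zero_freq; [ring|]. apply is_zero_freq_spec. intros n' Hn'. rewrite Hc.
    destruct (Z.eq_dec n' n0); [subst; contradiction | reflexivity].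
  - rewrite IH by auto. rewrite Hc. destruct (Z.eq_dec n0 n); [subst; contradiction|].
    simpl; ring.
Qed.

Lemma teval_app L P1 P2 u : teval L (P1 ++ P2) u = teval L P1 u + teval L P2 u.
Proof. induction P1 as [|[al c] P1 IH]; simpl; [ring | rewrite IH; ring]. Qed.

Lemma tmean_app L P1 P2 : tmean L (P1 ++ P2) = tmean L P1 + tmean L P2.
Proof. induction P1 as [|[al c] P1 IH]; simpl; [ring | rewrite IH; ring]. Qed.

Lemma teval_tmul_term L al c P u :
  teval L (flat_map (tmul_term (al, c)) P) u = al * cos (2 * PI * dot L c u) * teval L P u.
Proof.
  induction P as [|[be d] P IH]; simpl; [ring|].
  rewrite IH, dot_add, dot_sub, Rmult_plus_distr_l, Rmult_minus_distr_l,
    cos_plus, cos_minus. field.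
Qed.

Lemma teval_mul L P1 P2 u : teval L (tmul P1 P2) u = teval L P1 u * teval L P2 u.
Proof.
  unfold tmul. induction P1 as [|[al c] P1 IH]; simpl; [ring|].
  rewrite teval_app, IH, teval_tmul_term. ring.
Qed.

Lemma nonneg_coeffs_mul P1 P2 :
  nonneg_coeffs P1 -> nonneg_coeffs P2 -> nonneg_coeffs (tmul P1 P2).
Proof.
  unfold nonneg_coeffs, tmul. intros H1 H2 q Hq.
  apply in_flat_map in Hq. destruct Hq as [[al c] [Hp Hq]].
  apply in_flat_map in Hq. destruct Hq as [[be d] [Hr Hq]].
  specialize (H1 _ Hp). specialize (H2 _ Hr). simpl in H1, H2.
  simpl in Hq. destruct Hq as [<- | [<- | []]]; simpl; nra.
Qed.

(** For nonnegative coefficients the mean is supermultiplicative: a product of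
    two zero frequencies is a zero frequency, and all other terms only add.
    First for a single left factor. *)
Lemma tmean_tmul_term L al c P : 0 <= al -> nonneg_coeffs P ->
  tmean L (flat_map (tmul_term (al, c)) P) >=
  (if is_zero_freq L c then al else 0) * tmean L P.
Proof.
  intros Hal. induction P as [|[be d] P IH]; intros HP; simpl; [lra|].
  assert (Hbe : 0 <= be) by (apply (HP (be, d)); simpl; auto).
  assert (IH' := IH (fun p Hp => HP p (or_intror Hp))).
  assert (Hab : 0 <= al * be / 2) by nra.
  destruct (is_zero_freq L c) eqn:Ec, (is_zero_freq L d) eqn:Ed;
    try (destruct (is_zero_freq L (fun n => (c n + d n)%Z)),
                  (is_zero_freq L (fun n => (c n - d n)%Z)); lra).
  rewrite is_zero_freq_spec in Ec, Ed.
  assert (is_zero_freq L (fun n => (c n + d n)%Z) = true) as ->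
    by (apply is_zero_freq_spec; intros n Hn; rewrite Ec, Ed; auto).
  assert (is_zero_freq L (fun n => (c n - d n)%Z) = true) as ->
    by (apply is_zero_freq_spec; intros n Hn; rewrite Ec, Ed; auto).
  lra.
Qed.

Lemma tmean_mul L P1 P2 : nonneg_coeffs P1 -> nonneg_coeffs P2 ->
  tmean L (tmul P1 P2) >= tmean L P1 * tmean L P2.
Proof.
  unfold tmul. induction P1 as [|[al c] P1 IH]; intros H1 H2; simpl; [lra|].
  rewrite tmean_app.
  assert (Hal : 0 <= al) by (apply (H1 (al, c)); simpl; auto).
  assert (Hterm := tmean_tmul_term L al c P2 Hal H2).
  assert (IH' := IH (fun p Hp => H1 p (or_intror Hp)) H2).
  destruct (is_zero_freq L c); lra.
Qed.

(** The Fejer-type kernel.  [bump v = (1 + cos (2 PI v)) / 2] equals [1] at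
    integers and is small away from them; the kernel of order [p] on [L] is
    [prod_(n in L) bump (u n) ^ p], realised as a trigonometric polynomial. *)
Definition bump (v : R) : R := 1/2 + 1/2 * cos (2 * PI * v).

Definition zero_freq : Z -> Z := fun _ => 0%Z.
Definition unit_freq (n : Z) : Z -> Z := fun n' => if Z.eq_dec n' n then 1%Z else 0%Z.
Definition bump_poly (n : Z) : tpoly := (1/2, zero_freq) :: (1/2, unit_freq n) :: nil.

Fixpoint tpow (P : tpoly) (p : nat) : tpoly :=
  match p with O => (1, zero_freq) :: nil | S p' => tmul (tpow P p') P end.

Fixpoint kernel (p : nat) (L : list Z) : tpoly :=
  match L with
  | nil => (1, zero_freq) :: nil
  | n :: L' => tmul (tpow (bump_poly n) p) (kernel p L')
  end.

Fixpoint prodR (L : list Z) (f : Z -> R) : R :=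
  match L with nil => 1 | n :: L' => f n * prodR L' f end.

Lemma bump_range v : 0 <= bump v <= 1.
Proof. unfold bump. destruct (COS_bound (2 * PI * v)). lra. Qed.

Lemma dot_zero L u : dot L zero_freq u = 0.
Proof. apply dot_zero_freq, is_zero_freq_spec. reflexivity. Qed.

Lemma teval_unit L u : teval L ((1, zero_freq) :: nil) u = 1.
Proof. simpl. rewrite dot_zero, Rmult_0_r, cos_0. ring. Qed.

Lemma teval_bump L n u : NoDup L -> In n L -> teval L (bump_poly n) u = bump (u n).
Proof.
  intros HN Hin. unfold bump_poly, bump. simpl.
  rewrite dot_zero, (dot_single L n 1 (unit_freq n) u) by (auto; intros; reflexivity).
  rewrite Rmult_0_r, cos_0, Rmult_1_l. ring.
Qed.

Lemma teval_pow L P p u : teval L (tpow P p) u = teval L P u ^ p.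
Proof.
  induction p; simpl; [apply teval_unit|].
  rewrite teval_mul, IHp. ring.
Qed.

Lemma teval_kernel Lg p L u : NoDup Lg -> incl L Lg ->
  teval Lg (kernel p L) u = prodR L (fun n => bump (u n) ^ p).
Proof.
  intros HN. induction L as [|n L IH]; intros Hi; simpl; [apply teval_unit|].
  rewrite teval_mul, teval_pow, teval_bump, IH; auto.
  - intros z Hz; apply Hi; simpl; auto.
  - apply Hi; simpl; auto.
Qed.

Lemma nonneg_coeffs_unit : nonneg_coeffs ((1, zero_freq) :: nil).
Proof. intros q [<- | []]; simpl; lra. Qed.

Lemma nonneg_coeffs_pow P p : nonneg_coeffs P -> nonneg_coeffs (tpow P p).
Proof.
  intros HP; induction p; simpl; [apply nonneg_coeffs_unit | apply nonneg_coeffs_mul; auto].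
Qed.

Lemma nonneg_coeffs_bump n : nonneg_coeffs (bump_poly n).
Proof. intros q [<- | [<- | []]]; simpl; lra. Qed.

Lemma nonneg_coeffs_kernel p L : nonneg_coeffs (kernel p L).
Proof.
  induction L; simpl; [apply nonneg_coeffs_unit|].
  apply nonneg_coeffs_mul; auto. apply nonneg_coeffs_pow, nonneg_coeffs_bump.
Qed.

Definition freq_on (n : Z) (p : nat) (c : Z -> Z) : Prop :=
  exists k, (Z.abs k <= Z.of_nat p)%Z /\ forall n', c n' = if Z.eq_dec n' n then k else 0%Z.

Lemma tpow_bump_freq n p q : In q (tpow (bump_poly n) p) -> freq_on n p (snd q).
Proof.
  revert q. induction p as [|p IH]; simpl; intros q Hq.
  - destruct Hq as [<- | []]. exists 0%Z. split; [lia|].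
    intros n'; simpl. destruct (Z.eq_dec n' n); reflexivity.
  - unfold tmul in Hq. apply in_flat_map in Hq. destruct Hq as [[al c] [Hp Hq]].
    apply in_flat_map in Hq. destruct Hq as [[be d] [Hr Hq]].
    destruct (IH _ Hp) as [k [Hk Hc]]. simpl in Hc.
    assert (Hd : exists k', (Z.abs k' <= 1)%Z /\
                            forall n', d n' = if Z.eq_dec n' n then k' else 0%Z).
    { destruct Hr as [E | [E | []]]; inversion E; subst.
      - exists 0%Z; split; [lia|]. intros n'; unfold zero_freq; destruct (Z.eq_dec n' n); auto.
      - exists 1%Z; split; [lia|]. intros n'; reflexivity. }
    destruct Hd as [k' [Hk' Hd]].
    simpl in Hq. destruct Hq as [<- | [<- | []]]; simpl;
      [exists (k + k')%Z | exists (k - k')%Z];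
      (split; [lia | intros n'; rewrite Hc, Hd; destruct (Z.eq_dec n' n); reflexivity]).
Qed.

Lemma discrete_average Lg n p P : NoDup Lg -> In n Lg ->
  (forall q, In q P -> freq_on n p (snd q)) ->
  sum_upto (fun m => teval Lg P (fun _ => INR m / INR (S p))) (S p) = INR (S p) * tmean Lg P.
Proof.
  intros HN Hin. induction P as [|[al c] P IH]; intros HP; cbn [teval tmean].
  - rewrite sum_upto_const; ring.
  - rewrite sum_upto_plus, IH by (intros; apply HP; simpl; auto).
    destruct (HP (al, c)) as [k [Hk Hc]]; [simpl; auto|]. simpl in Hc.
    rewrite (sum_upto_ext _ (fun m => al * cos (2 * PI * (IZR k * (INR m / INR (S p)))))).
    2:{ intros m. rewrite (dot_single Lg n k c) by auto. reflexivity. }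
    rewrite sum_upto_scal.
    destruct (Z.eq_dec k 0) as [-> | Hk0].
    + assert (is_zero_freq Lg c = true) as ->.
      { apply is_zero_freq_spec. intros n' _. rewrite Hc. destruct (Z.eq_dec n' n); auto. }
      rewrite (sum_upto_ext _ (fun _ => 1))
        by (intros; rewrite Rmult_0_l, Rmult_0_r; apply cos_0).
      rewrite sum_upto_const. ring.
    + assert (is_zero_freq Lg c = false) as ->.
      { destruct (is_zero_freq Lg c) eqn:E; auto.
        apply is_zero_freq_spec with (n := n) in E; auto.
        rewrite Hc in E. destruct (Z.eq_dec n n); congruence. }
      rewrite cos_sum_roots_of_unity by auto. ring.
Qed.

(** The mean of [bump ^ p] is at least [1 / (p+1)]: in the discrete average the
    term [m = 0] already equals [1]. *)
Lemma tmean_bump_pow Lg n p : NoDup Lg -> In n Lg ->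
  tmean Lg (tpow (bump_poly n) p) >= / INR (S p).
Proof.
  intros HN Hin. assert (HS := INR_S_pos p).
  set (f := fun m : nat => teval Lg (tpow (bump_poly n) p) (fun _ => INR m / INR (S p))).
  assert (Hf : forall m, f m = bump (INR m / INR (S p)) ^ p)
    by (intros m; unfold f; rewrite teval_pow, teval_bump; auto).
  assert (E := discrete_average Lg n p _ HN Hin (tpow_bump_freq n p)). fold f in E.
  assert (Hge : 1 <= sum_upto f (S p)).
  { replace 1 with (f O).
    - apply sum_upto_ge_first; [|lia]. intros m. rewrite Hf. apply pow_le, bump_range.
    - rewrite Hf. unfold bump.
      change (INR 0) with 0. unfold Rdiv. rewrite Rmult_0_l, Rmult_0_r, cos_0.
      replace (1 * / 2 + 1 * / 2 * 1) with 1 by field. apply pow1. }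
  rewrite E in Hge. apply Rle_ge.
  apply (Rmult_le_reg_l (INR (S p))); auto. rewrite Rinv_r; lra.
Qed.

Lemma tmean_kernel Lg p L : NoDup Lg -> incl L Lg ->
  tmean Lg (kernel p L) >= (/ INR (S p)) ^ length L.
Proof.
  intros HN. assert (HS : 0 < / INR (S p)) by (apply Rinv_0_lt_compat, INR_S_pos).
  induction L as [|n L IH]; intros Hi; cbn [kernel length].
  - assert (E : is_zero_freq Lg zero_freq = true) by (apply is_zero_freq_spec; reflexivity).
    simpl. rewrite E. lra.
  - assert (A := tmean_mul Lg _ _ (nonneg_coeffs_pow _ p (nonneg_coeffs_bump n))
                   (nonneg_coeffs_kernel p L)).
    assert (B := tmean_bump_pow Lg n p HN (Hi n (or_introl eq_refl))).
    assert (C := IH (fun z Hz => Hi z (or_intror Hz))).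
    assert (D : 0 <= (/ INR (S p)) ^ length L) by (apply pow_le; lra).
    change ((/ INR (S p)) ^ S (length L)) with (/ INR (S p) * (/ INR (S p)) ^ length L).
    apply Rle_ge. eapply Rle_trans; [|apply Rge_le, A].
    apply Rmult_le_compat; lra.
Qed.

Lemma Q2R_inject_Z k : Q2R (inject_Z k) = IZR k.
Proof. unfold Q2R, inject_Z; simpl. rewrite Rinv_1; ring. Qed.

Lemma lin_comb_dot a c L : lin_comb a (fun n => inject_Z (c n)) L = dot L c a.
Proof. induction L; simpl; [reflexivity | rewrite IHL, Q2R_inject_Z; reflexivity]. Qed.

Lemma nonresonant a (Ha : Q_lin_indep_with_1 a) L c :
  NoDup L -> is_zero_freq L c = false -> sin (PI * dot L c a) <> 0.
Proof.
  intros HN Hc H0. apply sin_eq_0_0 in H0. destruct H0 as [z Hz].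
  assert (Hd : dot L c a = IZR z).
  { apply (Rmult_eq_reg_l PI); [|apply Rgt_not_eq, PI_RGT_0]. rewrite Hz; ring. }
  destruct (Ha L (fun n => inject_Z (c n)) (inject_Z (- z)) HN) as [_ H2].
  - rewrite lin_comb_dot, Hd, Q2R_inject_Z, opp_IZR. ring.
  - enough (is_zero_freq L c = true) by congruence.
    apply is_zero_freq_spec. intros n Hn.
    specialize (H2 n Hn). rewrite Q2R_inject_Z in H2. apply eq_IZR_R0; auto.
Qed.

(** The total size of the (bounded) Weyl sums of the nonconstant terms of [P]. *)
Fixpoint weyl_error (L : list Z) (a : Z -> R) (P : tpoly) : R :=
  match P with
  | nil => 0
  | (al, c) :: P' =>
      (if is_zero_freq L c then 0 else Rabs al / Rabs (sin (PI * dot L c a)))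
      + weyl_error L a P'
  end.

Lemma orbit_sum_ge a (Ha : Q_lin_indep_with_1 a) L P tg M : NoDup L ->
  sum_upto (fun m => teval L P (fun n => INR m * a n - tg n)) M >=
  INR M * tmean L P - weyl_error L a P.
Proof.
  intros HN. induction P as [|[al c] P IH]; cbn [teval tmean weyl_error].
  - rewrite sum_upto_const. lra.
  - rewrite sum_upto_plus. destruct (is_zero_freq L c) eqn:Ec.
    + rewrite (sum_upto_ext _ (fun _ => al)), sum_upto_const; [lra|].
      intros m. rewrite dot_zero_freq, Rmult_0_r, cos_0 by auto. ring.
    + set (g := dot L c a). set (phi := - (2 * PI * dot L c tg)).
      assert (Hs := nonresonant a Ha L c HN Ec). fold g in Hs.
      rewrite (sum_upto_ext _ (fun m => al * cos (2 * PI * INR m * g + phi))).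
      2:{ intros m. rewrite dot_affine. unfold g, phi. f_equal. f_equal. ring. }
      rewrite sum_upto_scal.
      assert (B := cos_sum_bound g phi M Hs).
      assert (Hp : 0 < Rabs (sin (PI * g))) by (apply Rabs_pos_lt; auto).
      set (W := sum_upto (fun m => cos (2 * PI * INR m * g + phi)) M) in *.
      assert (Habs : Rabs (al * W) <= Rabs al / Rabs (sin (PI * g))).
      { rewrite Rabs_mult. apply Rmult_le_compat_l; auto. apply Rabs_pos. }
      assert (Hneg := Rle_abs (- (al * W))). rewrite Rabs_Ropp in Hneg. lra.
Qed.

Lemma bump_far v d : 0 < d <= 1/2 -> (forall z, d <= Rabs (v - IZR z)) -> bump v <= bump d.
Proof.
  intros Hd Hf. set (w := v - IZR (Int_part v)).
  assert (Hw : 0 <= w < 1) by (destruct (base_Int_part v); unfold w; lra).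
  assert (H1 := Hf (Int_part v)). fold w in H1. rewrite Rabs_right in H1 by lra.
  assert (H2 := Hf (Int_part v + 1)%Z). rewrite plus_IZR in H2.
  replace (v - (IZR (Int_part v) + 1)) with (w - 1) in H2 by (unfold w; ring).
  rewrite Rabs_left in H2 by lra.
  assert (Hc : cos (2 * PI * v) = cos (2 * PI * w)).
  { replace (2 * PI * v) with (2 * PI * w + 2 * PI * IZR (Int_part v)) by (unfold w; ring).
    apply trig_Zperiod. }
  unfold bump. rewrite Hc. assert (HPI := PI_RGT_0).
  enough (cos (2 * PI * w) <= cos (2 * PI * d)) by lra.
  destruct (Rle_dec w (1/2)).
  - apply cos_decr_1; nra.
  - replace (2 * PI * w) with (- (2 * PI * (1 - w)) + 2 * PI * IZR 1) by (simpl; ring).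
    rewrite (proj2 (trig_Zperiod _ _)), cos_neg. apply cos_decr_1; nra.
Qed.

Lemma bump_lt_1 d : 0 < d <= 1/2 -> bump d < 1.
Proof.
  intros Hd. unfold bump. assert (HPI := PI_RGT_0).
  assert (cos (2 * PI * d) < cos 0) by (apply cos_decreasing_1; nra).
  rewrite cos_0 in *. lra.
Qed.

Lemma prodR_le_factor L f n0 : (forall n, In n L -> 0 <= f n <= 1) -> In n0 L ->
  prodR L f <= f n0.
Proof.
  induction L as [|n L IH]; intros Hf Hin; [destruct Hin|]; simpl.
  assert (Hrange : forall L', incl L' (n :: L) -> 0 <= prodR L' f <= 1).
  { induction L' as [|m L' IHL']; intros Hi; simpl; [lra|].
    assert (0 <= f m <= 1) by (apply Hf, Hi; simpl; auto).
    assert (0 <= prodR L' f <= 1) by (apply IHL'; intros z Hz; apply Hi; simpl; auto).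
    split; nra. }
  assert (0 <= prodR L f <= 1) by (apply Hrange; intros z Hz; simpl; auto).
  assert (0 <= f n <= 1) by (apply Hf; simpl; auto).
  destruct Hin as [<- | Hin]; [nra|].
  assert (prodR L f <= f n0) by (apply IH; auto; intros; apply Hf; simpl; auto).
  nra.
Qed.

Lemma bernoulli_ineq h q : 0 <= h -> 1 + INR q * h <= (1 + h) ^ q.
Proof.
  intros Hh. induction q; [simpl; lra|].
  rewrite S_INR. simpl pow. assert (0 <= INR q) by apply pos_INR. nra.
Qed.

(** [rho ^ q q] is bounded: writing [rho (1 + h) = 1], Bernoulli gives
    [rho ^ q q h <= rho ^ q (1 + h) ^ q = 1]. *)
Lemma geometric_times_linear_bounded (rho : R) : 0 < rho < 1 ->
  exists h, 0 < h /\ forall q, rho ^ q * (INR q * h) <= 1.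
Proof.
  intros Hr. exists (/ rho - 1). split.
  - enough (1 < / rho) by lra. rewrite <- Rinv_1. apply Rinv_lt_contravar; lra.
  - intros q. assert (E : rho ^ q * (1 + (/ rho - 1)) ^ q = 1).
    { rewrite <- Rpow_mult_distr.
      replace (rho * (1 + (/ rho - 1))) with 1 by (field; lra). apply pow1. }
    assert (0 < / rho - 1).
    { enough (1 < / rho) by lra. rewrite <- Rinv_1. apply Rinv_lt_contravar; lra. }
    assert (B := bernoulli_ineq (/ rho - 1) q ltac:(lra)).
    assert (0 <= rho ^ q) by (apply pow_le; lra). nra.
Qed.

(** For [p = q (N+1)] the previous bound gives
    [rho ^ p (p+1) ^ N <= rho ^ q ((N+2)/h) ^ N], which is small for large [q]. *)
Lemma geometric_beats_polynomial (rho : R) (N : nat) : 0 <= rho < 1 ->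
  exists p : nat, rho ^ p * INR (S p) ^ N < 1.
Proof.
  intros [Hr0 Hr1]. destruct (Req_dec rho 0) as [-> | Hrz]; [exists 1%nat; simpl; lra|].
  destruct (geometric_times_linear_bounded rho ltac:(lra)) as [h [Hh Hlin]].
  set (C := ((INR N + 2) / h) ^ N).
  assert (HC : 0 <= C).
  { apply pow_le. apply Rlt_le, Rdiv_lt_0_compat; [generalize (pos_INR N)|]; lra. }
  destruct (pow_lt_1_zero rho ltac:(rewrite Rabs_right; lra) (/ (C + 1))
              ltac:(apply Rinv_0_lt_compat; lra)) as [q0 Hq0].
  set (q := S q0).
  assert (Hq : rho ^ q < / (C + 1)).
  { specialize (Hq0 q ltac:(unfold q; lia)). rewrite Rabs_right in Hq0; auto.
    apply Rle_ge, pow_le; lra. }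
  assert (Hq1 : 1 <= INR q) by (unfold q; rewrite S_INR; generalize (pos_INR q0); lra).
  assert (Hrq : 0 <= rho ^ q) by (apply pow_le; lra).
  exists (q * S N)%nat.
  assert (HXY : rho ^ q * INR (S (q * S N)) <= (INR N + 2) / h).
  { assert (Hlen : INR (S (q * S N)) <= INR q * (INR N + 2)).
    { rewrite S_INR, mult_INR, S_INR. nra. }
    apply (Rmult_le_reg_r h); auto.
    replace ((INR N + 2) / h * h) with ((INR N + 2) * 1) by (field; lra).
    apply Rle_trans with ((INR N + 2) * (rho ^ q * (INR q * h))).
    - replace ((INR N + 2) * (rho ^ q * (INR q * h))) with (rho ^ q * (INR q * (INR N + 2)) * h)
        by ring.
      apply Rmult_le_compat_r; [lra|]. apply Rmult_le_compat_l; auto.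
    - apply Rmult_le_compat_l; [generalize (pos_INR N); lra | apply Hlin]. }
  rewrite pow_mult.
  replace ((rho ^ q) ^ S N * INR (S (q * S N)) ^ N)
    with (rho ^ q * (rho ^ q * INR (S (q * S N))) ^ N) by (rewrite Rpow_mult_distr; simpl; ring).
  assert (HP : (rho ^ q * INR (S (q * S N))) ^ N <= C).
  { apply pow_incr. split; [apply Rmult_le_pos; [lra | apply pos_INR] | exact HXY]. }
  assert (Hsmall : rho ^ q * (C + 1) < 1).
  { apply (Rmult_lt_compat_r (C + 1)) in Hq; [|lra]. rewrite Rinv_l in Hq; lra. }
  nra.
Qed.

(** The kernel of order [p] on [L] is at most [rho ^ p] wherever some coordinate
    misses its target, while its Weyl averages along [m a - tg] tend to its mean,
    which exceeds [rho ^ p] by the choice of [p]. *)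
Theorem kronecker a (Ha : Q_lin_indep_with_1 a) (L : list Z) (tg : Z -> R) (d : R) :
  NoDup L -> 0 < d -> exists m : nat, forall n, In n L ->
    exists z : Z, Rabs (INR m * a n - tg n - IZR z) < d.
Proof.
  intros HN Hd. set (d' := Rmin d (1/2)).
  assert (Hd' : 0 < d' <= 1/2) by (unfold d'; split; [apply Rmin_glb_lt; lra | apply Rmin_r]).
  assert (Hdd : d' <= d) by apply Rmin_l.
  set (rho := bump d').
  assert (Hrho : 0 <= rho < 1) by (split; [apply bump_range | apply bump_lt_1; auto]).
  destruct (geometric_beats_polynomial rho (length L) Hrho) as [p Hp].
  set (K := kernel p L). set (mu := tmean L K).
  assert (HS := INR_S_pos p).
  assert (Hmu : mu > rho ^ p).
  { assert (A := tmean_kernel L p L HN (incl_refl L)). fold K mu in A.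
    enough (rho ^ p < (/ INR (S p)) ^ length L) by lra.
    rewrite pow_inv. apply (Rmult_lt_reg_r (INR (S p) ^ length L)); [apply pow_lt; auto|].
    rewrite Rinv_l by (apply pow_nonzero; lra). exact Hp. }
  set (E := weyl_error L a K).
  destruct (INR_archimed (mu - rho ^ p) E ltac:(lra)) as [M HM].
  assert (Hsum := orbit_sum_ge a Ha L K tg M HN). fold mu E in Hsum.
  destruct (sum_upto_exists_gt (fun m => teval L K (fun n => INR m * a n - tg n)) M (rho ^ p))
    as [m Hm]; [lra|].
  exists m. intros n Hn. cbv beta in Hm.
  unfold K in Hm. rewrite teval_kernel in Hm by (auto; apply incl_refl).
  apply NNPP. intros Hno.
  assert (Hfar : forall z, d' <= Rabs (INR m * a n - tg n - IZR z)).
  { intros z. apply Rnot_lt_le. intros Hlt. apply Hno. exists z. lra. }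
  assert (Hb := bump_far (INR m * a n - tg n) d' Hd' Hfar). fold rho in Hb.
  assert (Hfac : forall n0, In n0 L -> 0 <= bump (INR m * a n0 - tg n0) ^ p <= 1).
  { intros n0 _. destruct (bump_range (INR m * a n0 - tg n0)).
    split; [apply pow_le; auto | rewrite <- (pow1 p); apply pow_incr; lra]. }
  assert (Hle := prodR_le_factor L _ n Hfac Hn). cbv beta in Hle.
  assert (bump (INR m * a n - tg n) ^ p <= rho ^ p)
    by (apply pow_incr; split; [apply bump_range | auto]).
  lra.
Qed.

Lemma T_eq p q : tval p = tval q -> p = q.
Proof. destruct p, q; simpl; intros ->; f_equal; apply proof_irrelevance. Qed.

Lemma Int_part_add_Z r z : Int_part (r + IZR z) = (Int_part r + z)%Z.
Proof.
  symmetry. apply Int_part_spec. destruct (base_Int_part r).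
  rewrite plus_IZR. lra.
Qed.

Lemma projT_Z r z : projT (r + IZR z) = projT r.
Proof.
  apply T_eq; simpl. unfold frac_part. rewrite Int_part_add_Z, plus_IZR. ring.
Qed.

Lemma projT_inj_Z r s : projT r = projT s -> exists z, r = s + IZR z.
Proof.
  intros E. apply (f_equal tval) in E. simpl in E. unfold frac_part in E.
  exists (Int_part r - Int_part s)%Z. rewrite minus_IZR. lra.
Qed.

Lemma tval_projT_small r : 0 <= r < 1 -> tval (projT r) = r.
Proof.
  intros H. simpl. unfold frac_part.
  rewrite <- (Int_part_spec r 0) by (simpl; lra). simpl; ring.
Qed.

Lemma projT_tval p : projT (tval p) = p.
Proof. apply T_eq, tval_projT_small, tval_range. Qed.

Lemma projT_add r s : T_add (projT r) (projT s) = projT (r + s).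
Proof.
  unfold T_add. simpl. unfold frac_part.
  replace (r - IZR (Int_part r) + (s - IZR (Int_part s))) with
    ((r + s) + IZR (- (Int_part r + Int_part s))) by (rewrite opp_IZR, plus_IZR; ring).
  apply projT_Z.
Qed.

Definition near0 (delta : R) (p : T) : Prop := exists s, Rabs s < delta /\ p = projT s.

Lemma near0_zero delta : 0 < delta -> near0 delta (projT 0).
Proof. intros Hd. exists 0. rewrite Rabs_R0. auto. Qed.

Lemma near0_open delta : T_open (near0 delta).
Proof.
  intros r [s0 [Hs0 E]]. destruct (projT_inj_Z r s0 E) as [z ->].
  exists (delta - Rabs s0). split; [lra|].
  intros s Hs. exists (s0 + (s - (s0 + IZR z))). split.
  - eapply Rle_lt_trans; [apply Rabs_triang | lra].
  - rewrite <- (projT_Z (s0 + (s - (s0 + IZR z))) z). f_equal. ring.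
Qed.

Lemma not_near0_half : ~ near0 (1/4) (projT (1/2)).
Proof.
  intros [s [Hs E]]. destruct (projT_inj_Z _ _ E) as [z Hz].
  apply Rabs_def2 in Hs. destruct Hs.
  destruct (Z_lt_le_dec z 1) as [Hz1 | Hz1].
  - assert (Hz0 : (z <= 0)%Z) by lia. apply IZR_le in Hz0. lra.
  - apply IZR_le in Hz1. lra.
Qed.

Definition cube (l : list Z) (delta : R) (e : G) : Prop :=
  forall n, In n l -> near0 delta (e n).

Lemma cube_mono l l' delta delta' e :
  incl l l' -> delta <= delta' -> cube l' delta e -> cube l delta' e.
Proof.
  intros Hl Hd He n Hn. destruct (He n (Hl n Hn)) as [s [Hs E]]. exists s. split; auto; lra.
Qed.

Lemma G_open_cube (E : G -> Prop) : G_open E -> E G_zero ->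
  exists l delta, 0 < delta /\ forall e, cube l delta e -> E e.
Proof.
  intros HE H0. destruct (HE G_zero H0) as [l [V [HV HVE]]]. exists l.
  assert (Hdelta : exists delta, 0 < delta /\
            forall n, In n l -> forall s, Rabs s < delta -> V n (projT s)).
  { clear HVE. induction l as [|n0 l IH].
    - exists 1; split; [lra | intros n []].
    - destruct IH as [d [Hd Hl]]; [intros; apply HV; simpl; auto|].
      destruct (HV n0 (or_introl eq_refl)) as [Ho H00].
      destruct (Ho 0 H00) as [eps [Heps Hs]].
      exists (Rmin d eps). split; [apply Rmin_glb_lt; lra|].
      intros n [<- | Hn] s Hs'.
      + apply Hs. rewrite Rminus_0_r. eapply Rlt_le_trans; [exact Hs' | apply Rmin_r].
      + apply Hl; auto. eapply Rlt_le_trans; [exact Hs' | apply Rmin_l]. }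
  destruct Hdelta as [delta [Hd Hdl]]. exists delta. split; auto.
  intros e He. apply HVE. intros n Hn. destruct (He n Hn) as [s [Hs ->]]. auto.
Qed.

Lemma G_open_shift (E : G -> Prop) : G_open E -> G_open (fun e => E (G_shift e)).
Proof.
  intros HE e He. destruct (HE _ He) as [l [V [H1 H2]]].
  exists (map (fun n => (n + 1)%Z) l), (fun n => V (n - 1)%Z). split.
  - intros n' Hn'. apply in_map_iff in Hn'. destruct Hn' as [n [<- Hn]].
    replace (n + 1 - 1)%Z with n by lia. apply H1; auto.
  - intros y Hy. apply H2. intros n Hn.
    assert (A := Hy (n + 1)%Z (in_map (fun n => (n + 1)%Z) l n Hn)).
    replace (n + 1 - 1)%Z with n in A by lia. exact A.
Qed.

Definition G_mult (a : Z -> R) (m : nat) : G := fun n => projT (INR m * a n).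

Lemma G_mult_dense a (Ha : Q_lin_indep_with_1 a) (y : G) (l : list Z) (delta : R) :
  0 < delta -> exists (m : nat) (e : G), cube l delta e /\ y = G_add e (G_mult a m).
Proof.
  intros Hd.
  destruct (kronecker a Ha (nodup Z.eq_dec l) (fun n => tval (y n)) delta
              (NoDup_nodup _ _) Hd) as [m Hm].
  exists m, (fun n => projT (tval (y n) - INR m * a n)). split.
  - intros n Hn. destruct (Hm n) as [z Hz]; [apply nodup_In; auto|].
    exists (- (INR m * a n - tval (y n) - IZR z)). rewrite Rabs_Ropp. split; auto.
    rewrite <- (projT_Z (tval (y n) - INR m * a n) z). f_equal. ring.
  - apply functional_extensionality; intros n. unfold G_add, G_mult.
    rewrite projT_add. replace (tval (y n) - INR m * a n + INR m * a n) with (tval (y n)) by ring.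
    symmetry; apply projT_tval.
Qed.

Section TopGroupFacts.
Variable H : TopGroup.

Lemma mulVr (a : H) : tg_mul a (tg_inv a) = tg_one.
Proof.
  rewrite <- (tg_mul1l H (tg_mul a (tg_inv a))), <- (tg_mulVl H (tg_inv a)) at 1.
  rewrite <- tg_assoc, (tg_assoc H (tg_inv a) a (tg_inv a)), tg_mulVl, tg_mul1l.
  apply tg_mulVl.
Qed.

Lemma mulr1 (a : H) : tg_mul a tg_one = a.
Proof. rewrite <- (tg_mulVl H a), tg_assoc, mulVr, tg_mul1l. reflexivity. Qed.

Lemma mul_cancel_l (c a b : H) : tg_mul c a = tg_mul c b -> a = b.
Proof.
  intros E. rewrite <- (tg_mul1l H a), <- (tg_mul1l H b), <- (tg_mulVl H c), <- !tg_assoc, E.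
  reflexivity.
Qed.

Lemma inv_one : tg_inv (tg_one : H) = tg_one.
Proof. rewrite <- (mulr1 (tg_inv tg_one)). apply tg_mulVl. Qed.

Lemma inv_mul (a b : H) : tg_inv (tg_mul a b) = tg_mul (tg_inv b) (tg_inv a).
Proof.
  apply (mul_cancel_l (tg_mul a b)). rewrite mulVr, tg_assoc,
    <- (tg_assoc H a b (tg_inv b)), mulVr, mulr1, mulVr. reflexivity.
Qed.

Lemma eq_of_mul_inv (a b : H) : tg_mul a (tg_inv b) = tg_one -> a = b.
Proof.
  intros E. rewrite <- (mulr1 a), <- (tg_mulVl H b), tg_assoc, E, tg_mul1l. reflexivity.
Qed.

Definition conjg (t h : H) : H := tg_mul (tg_mul t h) (tg_inv t).

Lemma conjg_mul t h k : conjg t (tg_mul h k) = tg_mul (conjg t h) (conjg t k).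
Proof.
  unfold conjg. rewrite !tg_assoc. f_equal.
  rewrite <- (tg_assoc H (tg_mul t h) (tg_inv t) t), tg_mulVl, mulr1. reflexivity.
Qed.

Lemma conjg_one t : conjg t tg_one = tg_one.
Proof. unfold conjg. rewrite mulr1, mulVr. reflexivity. Qed.

Lemma conjg_cont_at_one t (W : H -> Prop) : tg_open W -> W tg_one ->
  exists Q, tg_open Q /\ Q tg_one /\ forall h, Q h -> W (conjg t h).
Proof.
  intros HW HW1. rewrite <- (conjg_one t) in HW1.
  destruct (tg_mul_cont H W HW _ _ HW1) as [P [R0 [HP [HR0 [HPt [HRt HPR]]]]]].
  destruct (tg_mul_cont H P HP t tg_one HPt) as [P1 [Q [HP1 [HQ [HP1t [HQ1 HPQ]]]]]].
  exists Q. repeat split; auto.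
  intros h Hh. apply HPR; auto.
Qed.

Lemma mul_inv_cont_at_one (N : H -> Prop) : nbhd1 N ->
  exists U1 U2 : H -> Prop, tg_open U1 /\ U1 tg_one /\ tg_open U2 /\ U2 tg_one /\
    forall a b, U1 a -> U2 b -> N (tg_mul a (tg_inv b)).
Proof.
  intros [O [HO [HO1 HON]]].
  rewrite <- (tg_mul1l H tg_one) in HO1.
  destruct (tg_mul_cont H O HO _ _ HO1) as [U1 [U2 [HU1 [HU2 [HU11 [HU21 HU]]]]]].
  exists U1, (fun b => U2 (tg_inv b)). repeat split; auto.
  - apply tg_inv_cont; auto.
  - rewrite inv_one; auto.
Qed.

(** The only separation property of [H] we need: [1] is the only point lying in
    every neighbourhood of [1]. *)
Definition separated_at_one : Prop :=
  forall g : H, (forall N, nbhd1 N -> N g) -> g = tg_one.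

Lemma metrizable_separated : metrizable H -> separated_at_one.
Proof.
  intros [d [Hd0 [Hsym [Htri Hop]]]] g Hg. apply NNPP. intros Hne.
  assert (Hdpos : forall u v, 0 <= d u v).
  { intros u v. assert (d u u = 0) by (apply Hd0; reflexivity).
    assert (A := Htri u v u). rewrite (Hsym v u) in A. lra. }
  assert (Hr : 0 < d tg_one g).
  { destruct (Hdpos tg_one g) as [h | h]; auto.
    exfalso. apply Hne. symmetry. apply Hd0. auto. }
  assert (Hball : nbhd1 (fun z => d tg_one z < d tg_one g)).
  { exists (fun z => d tg_one z < d tg_one g). split; [|split; auto].
    - apply Hop. intros z Hz. exists (d tg_one g - d tg_one z). split; [lra|].
      intros y Hy. assert (A := Htri tg_one z y). lra.
    - assert (d tg_one tg_one = 0) by (apply Hd0; reflexivity). lra. }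
  specialize (Hg _ Hball). lra.
Qed.

Definition G_hom (f : G -> H) : Prop := forall y z, f (G_add y z) = tg_mul (f y) (f z).

Definition cont_at_zero (f : G -> H) : Prop :=
  forall W, tg_open W -> W tg_one ->
    exists l delta, 0 < delta /\ forall e, cube l delta e -> W (f e).

Lemma G_add_zero : G_add G_zero G_zero = G_zero.
Proof.
  apply functional_extensionality; intros n. unfold G_add, G_zero.
  rewrite projT_add, Rplus_0_r. reflexivity.
Qed.

Lemma G_hom_zero f : G_hom f -> f G_zero = tg_one.
Proof.
  intros Hf. apply (mul_cancel_l (f G_zero)). rewrite mulr1, <- Hf, G_add_zero. reflexivity.
Qed.

Lemma cont_at_zero_of_open_preimage f : G_hom f ->
  (forall W, tg_open W -> G_open (fun e => W (f e))) -> cont_at_zero f.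
Proof.
  intros Hf Hopen W HW HW1. apply G_open_cube; auto. rewrite G_hom_zero; auto.
Qed.

Lemma G_hom_agree_mult (a : Z -> R) f g : G_hom f -> G_hom g ->
  f (fun n => projT (a n)) = g (fun n => projT (a n)) ->
  forall m, f (G_mult a m) = g (G_mult a m).
Proof.
  intros Hf Hg Hx. induction m as [|m IH].
  - assert (E : G_mult a 0 = G_zero).
    { apply functional_extensionality; intros n. unfold G_mult, G_zero. simpl INR.
      rewrite Rmult_0_l. reflexivity. }
    rewrite E, !G_hom_zero; auto.
  - assert (E : G_mult a (S m) = G_add (G_mult a m) (fun n => projT (a n))).
    { apply functional_extensionality; intros n. unfold G_mult, G_add.
      rewrite projT_add, S_INR. f_equal. ring. }
    rewrite E, Hf, Hg, IH, Hx. reflexivity.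
Qed.

(** Two homomorphisms, continuous at [0], which agree on the dense set of
    multiples of [x], agree everywhere: writing [y = e + m x] with [e] in a
    small cube, [f y (g y)^-1 = f e (g e)^-1] is close to [1]. *)
Lemma G_hom_ext (a : Z -> R) (Ha : Q_lin_indep_with_1 a) f g :
  separated_at_one -> G_hom f -> G_hom g -> cont_at_zero f -> cont_at_zero g ->
  (forall m, f (G_mult a m) = g (G_mult a m)) -> forall y, f y = g y.
Proof.
  intros Hsep Hf Hg Hfc Hgc Hmult y. apply eq_of_mul_inv, Hsep. intros N HN.
  destruct (mul_inv_cont_at_one N HN) as [U1 [U2 [HU1 [HU11 [HU2 [HU21 HU]]]]]].
  destruct (Hfc U1 HU1 HU11) as [l1 [d1 [Hd1 Hl1]]].
  destruct (Hgc U2 HU2 HU21) as [l2 [d2 [Hd2 Hl2]]].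
  destruct (G_mult_dense a Ha y (l1 ++ l2) (Rmin d1 d2) (Rmin_glb_lt _ _ _ Hd1 Hd2))
    as [m [e [He ->]]].
  rewrite Hf, Hg, Hmult, inv_mul, !tg_assoc, <- (tg_assoc H (f e)), mulVr, mulr1.
  apply HU.
  - apply Hl1. apply (cube_mono _ _ _ _ _ (incl_appl l2 (incl_refl l1)) (Rmin_l d1 d2) He).
  - apply Hl2. apply (cube_mono _ _ _ _ _ (incl_appr l1 (incl_refl l2)) (Rmin_r d1 d2) He).
Qed.

End TopGroupFacts.

Lemma shift_iter_val k (z : G) n : Nat.iter k G_shift z n = z (n + Z.of_nat k)%Z.
Proof.
  revert n. induction k as [|k IH]; intros n; simpl.
  - f_equal; lia.
  - unfold G_shift. rewrite IH. f_equal; lia.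
Qed.

Lemma Z_list_bounded (l : list Z) : exists K, (0 <= K)%Z /\ forall n, In n l -> (n < K)%Z.
Proof.
  induction l as [|n0 l [K [HK Hl]]]; [exists 0%Z; split; [lia | intros n []]|].
  exists (Z.max (n0 + 1) K). split; [lia|].
  intros n [<- | Hn]; [lia | specialize (Hl n Hn); lia].
Qed.

(** The shift of [T^Z] is not induced by an inner automorphism of a SIN group
    containing [G]: take a conjugation-invariant neighbourhood [V] of [1] that
    controls coordinate [0]; it contains the spike [1/2] placed at a coordinate
    [K] it does not see, and conjugating [K] times moves the spike to [0]. *)
Lemma no_inner_shift (H : TopGroup) (iota : G -> H) (t : H) :
  top_subgroup_embedding H iota -> SIN_group H ->
  ~ (forall y, conjg H t (iota y) = iota (G_shift y)).
Proof.
  intros [Hhom [_ Hemb]] HSIN Hconj.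
  assert (Hiota0 : iota G_zero = tg_one) by exact (G_hom_zero H iota Hhom).
  set (U := fun y : G => near0 (1/4) (y 0%Z)).
  assert (HU : G_open U).
  { intros y Hy. exists (0%Z :: nil), (fun _ => near0 (1/4)). split.
    - intros n [<- | []]. split; [apply near0_open | exact Hy].
    - intros y' Hy'. apply Hy'. simpl; auto. }
  destruct (proj1 (Hemb U) HU) as [W [HW HWU]].
  assert (HW1 : nbhd1 W).
  { exists W. repeat split; auto. rewrite <- Hiota0. apply HWU, near0_zero. lra. }
  destruct (HSIN W HW1) as [V [[O [HO [HO1 HOV]]] [HVW HVinv]]].
  destruct (G_open_cube (fun e => O (iota e))) as [l [delta [Hd Hcube]]].
  { apply (proj2 (Hemb _)). exists O. split; [auto | intros; reflexivity]. }
  { rewrite Hiota0; auto. }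
  destruct (Z_list_bounded l) as [K [HK HlK]].
  set (spike := fun n => if Z.eq_dec n K then projT (1/2) else projT 0).
  assert (Hspike : V (iota spike)).
  { apply HOV, Hcube. intros n Hn. unfold spike.
    destruct (Z.eq_dec n K) as [-> | _]; [specialize (HlK K Hn); lia | apply near0_zero; auto]. }
  assert (Hiter : forall k z, V (iota z) -> V (iota (Nat.iter k G_shift z))).
  { induction k as [|k IH]; intros z Hz; simpl; auto.
    rewrite <- Hconj. apply HVinv. auto. }
  specialize (HVW _ (Hiter (Z.to_nat K) spike Hspike)).
  apply HWU in HVW. unfold U in HVW.
  rewrite shift_iter_val, Z2Nat.id in HVW by auto.
  unfold spike in HVW. simpl in HVW. destruct (Z.eq_dec K K); [|congruence].
  exact (not_near0_half HVW).
Qed.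

(** If conjugation by [t] acts as the shift on [x = (a_n)], it does so on all of
    [G]: both sides are continuous homomorphisms agreeing on the multiples of [x]. *)
Lemma inner_shift_extends (a : Z -> R) (Ha : Q_lin_indep_with_1 a)
    (H : TopGroup) (iota : G -> H) (t : H) :
  top_subgroup_embedding H iota -> separated_at_one H ->
  conjg H t (iota (fun n => projT (a n))) = iota (G_shift (fun n => projT (a n))) ->
  forall y, conjg H t (iota y) = iota (G_shift y).
Proof.
  intros [Hhom [_ Hemb]] Hsep Hx.
  assert (Hpre : forall W, tg_open W -> G_open (fun e => W (iota e)))
    by (intros W HW; apply Hemb; exists W; split; [auto | intros; reflexivity]).
  assert (Hconj_hom : G_hom H (fun y => conjg H t (iota y)))
    by (intros y z; rewrite Hhom; apply conjg_mul).
  assert (Hshift_hom : G_hom H (fun y => iota (G_shift y))) by (intros y z; apply Hhom).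
  apply (G_hom_ext H a Ha); auto.
  - intros W HW HW1. destruct (conjg_cont_at_one H t W HW HW1) as [Q [HQ [HQ1 HQW]]].
    destruct (cont_at_zero_of_open_preimage H iota Hhom Hpre Q HQ HQ1) as [l [d [Hd Hl]]].
    exists l, d. auto.
  - apply cont_at_zero_of_open_preimage; auto.
    intros W HW. apply (G_open_shift (fun z => W (iota z))), Hpre, HW.
  - exact (G_hom_agree_mult H a _ _ Hconj_hom Hshift_hom Hx).
Qed.

Theorem mainTheorem18 (a : Z -> R) (Ha : Q_lin_indep_with_1 a) :
  let x : G := fun n => projT (a n) in
  ~ exists (H : TopGroup) (iota : G -> H) (t : H),
      top_subgroup_embedding H iota /\ metrizable H /\ SIN_group H /\
      tg_mul (tg_mul t (iota x)) (tg_inv t) = iota (G_shift x).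
Proof.
  intros x [H [iota [t [Hemb [Hmet [HSIN Hconj]]]]]].
  apply (no_inner_shift H iota t Hemb HSIN).
  exact (inner_shift_extends a Ha H iota t Hemb (metrizable_separated H Hmet) Hconj).
Qed.
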